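(* If $S$ is a MANS-semigroup and $\mathrm{e}(S)=3$, then there exist $m,a,b,t\in\mathbb{N}$ such that $m\geq 3$, $a\geq 1$, $t\in\{2,\ldots,m-1\}$, $(t-1)(am+1)<bm+t<t(am+1)$, and $(\mathrm{m}(S),\mathrm{r}(S),\mathrm{M}(S))=(m,\ am+1,\ bm+t)$.
   Context: $\mathbb{N}=\{0,1,2,\ldots\}$. A numerical semigroup is a subset $S\subseteq\mathbb{N}$ closed under addition, containing $0$, with $\mathbb{N}\setminus S$ finite. It has a unique finite minimal system of generators $\mathrm{msg}(S)=\{n_1<\cdots<n_e\}$; $\mathrm{e}(S)=e$, $\mathrm{m}(S)=n_1$ (multiplicity), $\mathrm{r}(S)=n_2$ (ratio), $\mathrm{M}(S)=n_e$. $S$ is a MANS-semigroup if $w(1)<w(2)<\cdots<w(\mathrm{m}(S)-1)$, where $w(i)$ is the least element of $S$ congruent to $i$ modulo $\mathrm{m}(S)$. *)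

From mathcomp Require Import all_boot.
Set Implicit Arguments. Unset Strict Implicit. Unset Printing Implicit Defensive.

Definition numerical_semigroup (S : nat -> Prop) : Prop :=
  S 0 /\ (forall x y, S x -> S y -> S (x + y)) /\
  (exists N, forall n, N <= n -> S n).

Inductive gen (G : seq nat) : nat -> Prop :=
| gen0 : gen G 0
| genS : forall g x, g \in G -> gen G x -> gen G (g + x).

Definition generates (S : nat -> Prop) (G : seq nat) : Prop :=
  forall x, S x <-> gen G x.

Definition is_msg (S : nat -> Prop) (s : seq nat) : Prop :=
  sorted ltn s /\ generates S s /\
  (forall G, {subset G <= s} -> generates S G -> {subset s <= G}).

Definition is_w (S : nat -> Prop) (m i x : nat) : Prop :=
  S x /\ x %% m = i %% m /\ (forall y, S y -> y %% m = i %% m -> x <= y).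

(* MANS: w(1) < w(2) < ... < w(m-1), where m = m(S). *)
Definition MANS (S : nat -> Prop) (m : nat) : Prop :=
  forall i j x y, 1 <= i -> i < j -> j <= m - 1 ->
    is_w S m i x -> is_w S m j y -> x < y.

From Stdlib Require Import Classical_Prop Wf_nat.
From mathcomp Require Import all_boot.
From mathcomp Require Import zify.

Set Implicit Arguments.
Unset Strict Implicit.
Unset Printing Implicit Defensive.

(* Let m = n1 and t = n3 mod m.  By minimality of the generators, the elements
   of S below n2 are multiples of m and those below n3 lie in <m, n2>; no
   element of <m, n2> below n3 is congruent to n3, so n3 = w(t) and 2 <= t.
   If n2 mod m = j > 1, MANS gives w(1) < w(j) = n2, so w(1) would be a
   multiple of m: hence n2 = am + 1.  Then t*n2 lies in S, is congruent to n3
   and is not n3, so n3 < t*n2.  Finally w(t-1) < w(t) = n3 by MANS, and an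
   element x of <m, am + 1> is at least (x mod m)(am + 1), which gives
   (t-1)*n2 <= w(t-1) < n3. *)

Lemma gen_mem G g : g \in G -> gen G g.
Proof. by move=> Gg; rewrite -[g]addn0; apply: genS Gg (gen0 G). Qed.

Lemma gen_add G x y : gen G x -> gen G y -> gen G (x + y).
Proof. by elim=> [|g x' Gg _ IH] Gy //; rewrite -addnA; apply: genS Gg (IH Gy). Qed.

Lemma gen_mul G g k : g \in G -> gen G (k * g).
Proof. by move=> Gg; elim: k => [|k IH]; [apply: gen0 | rewrite mulSn; apply: genS Gg IH]. Qed.

Lemma gen_subset G H x : {subset G <= H} -> gen G x -> gen H x.
Proof. by move=> sGH; elim=> [|g x' Gg _ IH]; [apply: gen0 | apply: genS (sGH _ Gg) IH]. Qed.

Lemma gen_small_subset G H y :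
  (forall g, g \in G -> g <= y -> g \in H) -> gen G y -> gen H y.
Proof.
move=> sGH Gy; elim: Gy sGH => [|g x Gg _ IH] sGH; first exact: gen0.
apply: genS; first by apply: sGH Gg _; apply: leq_addr.
by apply: IH => g' Gg' le_g'x; apply: sGH Gg' (leq_trans le_g'x (leq_addl _ _)).
Qed.

Lemma gen_seq1_dvd a y : gen [:: a] y -> a %| y.
Proof. by elim=> [|g x + _ IH] //; rewrite mem_seq1 => /eqP->; rewrite dvdn_add. Qed.

Lemma gen_modn_le (G : seq nat) a y z :
  a \in G -> gen G y -> y <= z -> y = z %[mod a] -> gen G z.
Proof.
move=> Ga Gy le_yz /eqP; rewrite eq_sym eqn_mod_dvd // => /divnK def_zy.
by rewrite -(subnKC le_yz) -def_zy; apply: gen_add Gy (gen_mul _ Ga).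
Qed.

(* For any representation x = p*m + q*n, x mod m = q mod m <= q. *)
Lemma gen_pair_modn_mul_le m n x :
  n %% m = 1 -> gen [:: m; n] x -> (x %% m) * n <= x.
Proof.
move=> n_mod; elim=> {x} [|g x + _ IH]; first by rewrite mod0n.
rewrite !inE => /orP[]/eqP->.
  by rewrite modnDl; apply: leq_trans IH (leq_addl _ _).
have le_mod : (n + x) %% m <= (x %% m).+1.
  by rewrite -modnDml n_mod -modnDmr; apply: leq_mod.
by apply: leq_trans (leq_mul le_mod (leqnn n)) _; rewrite mulSn leq_add2l.
Qed.

Lemma generates_subset S s G : generates S s -> {subset G <= s} ->
  (forall g, g \in s -> gen G g) -> generates S G.
Proof.
move=> Ss sGs Gs x; split=> [/Ss|/(gen_subset sGs)/Ss //].
by elim=> [|g y sg _ IH]; [apply: gen0 | apply: gen_add (Gs _ sg) IH].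
Qed.

Lemma msg_not_gen_rem S s x : is_msg S s -> x \in s -> ~ gen (rem x s) x.
Proof.
move=> [s_sorted [Ss s_min]] sx Gx.
have s_uniq : uniq s := sorted_uniq ltn_trans ltnn s_sorted.
have sub_rem : {subset rem x s <= s} by move=> g; apply: mem_rem.
suff : x \in rem x s by rewrite mem_rem_uniq // inE eqxx.
apply: (s_min _ sub_rem) sx; apply: generates_subset Ss sub_rem _ => g sg.
have [->|ne_gx] := eqVneq g x; first exact: Gx.
by apply: gen_mem; rewrite mem_rem_uniq // inE ne_gx.
Qed.

Lemma is_w_exists S m i x : S x -> x %% m = i %% m -> exists w, is_w S m i w.
Proof.
move=> Sx x_mod; pose P y := S y /\ y %% m = i %% m.
have [w [[[Sw w_mod] w_min] _]] : has_unique_least_element le P.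
  by apply: dec_inh_nat_subset_has_unique_least_element; [move=> n; apply: classic | exists x].
by exists w; split; [|split] => // y Sy y_mod; apply/leP/w_min.
Qed.

Lemma numerical_semigroup_is_w S m i :
  numerical_semigroup S -> 0 < m -> exists w, is_w S m i w.
Proof.
move=> [_ [_ [N SN]]] m_gt0; apply: (@is_w_exists _ _ _ (N * m + i)).
  by apply: SN; nia.
by rewrite modnMDl.
Qed.

Section EmbeddingDimensionThree.

Variables (S : nat -> Prop) (n1 n2 n3 : nat).
Hypothesis S_msg : is_msg S [:: n1; n2; n3].

Lemma msg3_lt : n1 < n2 < n3.
Proof. by case: S_msg => /= /and3P[-> -> _]. Qed.

Lemma msg3_irredundant :
  [/\ ~ gen [:: n2; n3] n1, ~ gen [:: n1; n3] n2 & ~ gen [:: n1; n2] n3].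
Proof.
have /andP[lt12 lt23] := msg3_lt; have lt13 := ltn_trans lt12 lt23.
have not_gen_rem x : x \in [:: n1; n2; n3] -> ~ gen (rem x [:: n1; n2; n3]) x.
  exact: msg_not_gen_rem S_msg.
split; [move: (not_gen_rem n1) | move: (not_gen_rem n2) | move: (not_gen_rem n3)];
  by rewrite /= !inE !eqxx ?orbT ?(ltn_eqF lt12) ?(ltn_eqF lt13) ?(ltn_eqF lt23) => /(_ isT).
Qed.

Lemma msg3_gt0 : 0 < n1.
Proof.
case: msg3_irredundant => not_gen1 _ _; rewrite lt0n; apply/eqP => n1_eq0.
by apply: not_gen1; rewrite n1_eq0; apply: gen0.
Qed.

Lemma msg3_dvd_lt_n2 y : S y -> y < n2 -> n1 %| y.
Proof.
have /andP[lt12 lt23] := msg3_lt.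
case: S_msg => _ [Ss _] /Ss Sy lt_y2; apply/gen_seq1_dvd/(gen_small_subset _ Sy).
by move=> g; rewrite !inE => /or3P[]/eqP-> //; lia.
Qed.

Lemma msg3_gen_lt_n3 y : S y -> y < n3 -> gen [:: n1; n2] y.
Proof.
case: S_msg => _ [Ss _] /Ss Sy lt_y3; apply: (gen_small_subset _ Sy).
by move=> g; rewrite !inE => /or3P[]/eqP-> le_gy; rewrite ?eqxx ?orbT //; lia.
Qed.

Lemma msg3_gen12_modn_neq y :
  gen [:: n1; n2] y -> y <= n3 -> y %% n1 != n3 %% n1.
Proof.
case: msg3_irredundant => _ _ not_gen3 Gy le_y3; apply/eqP => y_mod.
by apply/not_gen3/(gen_modn_le _ Gy le_y3 y_mod); rewrite inE eqxx.
Qed.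

Lemma msg3_n2_modn_neq0 : n2 %% n1 != 0.
Proof.
case: msg3_irredundant => _ not_gen2 _; apply/eqP => n2_mod.
apply/not_gen2/(@gen_modn_le _ n1 0); rewrite ?inE ?eqxx ?mod0n ?n2_mod //.
exact: gen0.
Qed.

Lemma msg3_is_w_n2 : is_w S n1 (n2 %% n1) n2.
Proof.
case: S_msg => _ [Ss _].
split; first by apply/Ss/gen_mem; rewrite !inE eqxx orbT.
split=> [|y Sy y_mod]; first by rewrite modn_mod.
rewrite leqNgt; apply/negP => lt_y2; have := msg3_dvd_lt_n2 Sy lt_y2.
by rewrite /dvdn y_mod modn_mod (negbTE msg3_n2_modn_neq0).
Qed.

Lemma msg3_is_w_n3 : is_w S n1 (n3 %% n1) n3.
Proof.
case: S_msg => _ [Ss _].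
split; first by apply/Ss/gen_mem; rewrite !inE eqxx !orbT.
split=> [|y Sy y_mod]; first by rewrite modn_mod.
rewrite leqNgt; apply/negP => lt_y3.
have := msg3_gen12_modn_neq (msg3_gen_lt_n3 Sy lt_y3) (ltnW lt_y3).
by rewrite y_mod modn_mod eqxx.
Qed.

Hypotheses (S_ns : numerical_semigroup S) (S_mans : MANS S n1).

Lemma msg3_n2_modn : n2 %% n1 = 1.
Proof.
have n1_gt0 := msg3_gt0; have j_lt := ltn_pmod n2 n1_gt0.
have j_neq0 := msg3_n2_modn_neq0.
apply/eqP; rewrite eqn_leq lt0n j_neq0 andbT leqNgt; apply/negP => j_gt1.
have [w w1] := numerical_semigroup_is_w 1 S_ns n1_gt0.
have lt_w2 : w < n2 by apply: (S_mans _ _ _ w1 msg3_is_w_n2); lia.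
case: w1 => Sw [w_mod _].
by have := msg3_dvd_lt_n2 Sw lt_w2; rewrite /dvdn w_mod modn_small //; lia.
Qed.

Lemma msg3_n3_modn_ge2 : 2 <= n3 %% n1.
Proof.
have /andP[_ lt23] := msg3_lt.
have := msg3_gen12_modn_neq (gen0 _) (leq0n n3); rewrite mod0n.
have n2_gen : gen [:: n1; n2] n2 by apply: gen_mem; rewrite !inE eqxx orbT.
have := msg3_gen12_modn_neq n2_gen (ltnW lt23); rewrite msg3_n2_modn.
lia.
Qed.

Lemma msg3_n3_upper_bound : n3 < n3 %% n1 * n2.
Proof.
rewrite ltnNge; apply/negP => le_3t.
have n2_mem : n2 \in [:: n1; n2] by rewrite !inE eqxx orbT.
have := msg3_gen12_modn_neq (gen_mul (n3 %% n1) n2_mem) le_3t.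
by rewrite -modnMmr msg3_n2_modn muln1 modn_mod eqxx.
Qed.

Lemma msg3_n3_lower_bound : (n3 %% n1 - 1) * n2 < n3.
Proof.
have t_ge2 := msg3_n3_modn_ge2; have t_lt := ltn_pmod n3 msg3_gt0.
have [w wt1] := numerical_semigroup_is_w (n3 %% n1 - 1) S_ns msg3_gt0.
have lt_w3 : w < n3 by apply: (S_mans _ _ _ wt1 msg3_is_w_n3); lia.
case: wt1 => Sw [w_mod _].
have := gen_pair_modn_mul_le msg3_n2_modn (msg3_gen_lt_n3 Sw lt_w3).
by rewrite w_mod modn_small //; lia.
Qed.

End EmbeddingDimensionThree.

Theorem proposition3p1 (S : nat -> Prop) (n1 n2 n3 : nat) :
  numerical_semigroup S ->
  is_msg S [:: n1; n2; n3] ->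
  MANS S n1 ->
  exists m a b t : nat,
    [/\ 3 <= m, 1 <= a, 2 <= t <= m - 1,
        (t - 1) * (a * m + 1) < b * m + t < t * (a * m + 1) &
        (n1, n2, n3) = (m, a * m + 1, b * m + t)].
Proof.
move=> S_ns S_msg S_mans.
have /andP[lt12 _] := msg3_lt S_msg.
have n1_gt0 := msg3_gt0 S_msg.
have t_ge2 := msg3_n3_modn_ge2 S_msg S_ns S_mans.
have t_lt := ltn_pmod n3 n1_gt0.
have n2E : n2 = n2 %/ n1 * n1 + 1 by rewrite {1}(divn_eq n2 n1) (msg3_n2_modn S_msg S_ns S_mans).
exists n1, (n2 %/ n1), (n3 %/ n1), (n3 %% n1); rewrite -n2E -divn_eq.
split=> //; try lia.
by rewrite (msg3_n3_lower_bound S_msg S_ns S_mans) (msg3_n3_upper_bound S_msg S_ns S_mans).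
Qed.
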